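(* Let $\gamma_\sigma=(\{a,b\},\emptyset,\emptyset,\{(a,b,a)\})$ be the GES on two distinct events with no conflicts, no initial causes, and where the occurrence of $b$ adds $a$ as a cause of $a$ (so $\mathrm{Traces}(\gamma_\sigma)=\{\epsilon,a,b,ab\}$). Then there is no SES $\sigma$ with $\mathrm{Traces}(\sigma)=\mathrm{Traces}(\gamma_\sigma)$.
   Context: GES: $\gamma=(E,\#,\to,\lhd)$ with $\#\subseteq E^2$ irreflexive symmetric, $\to\subseteq E^2$, $\lhd\subseteq E^3$ where $(c,m,t)\in\lhd$ means ''$m$ adds $c$ as a cause of $t$'', requiring $\neg(c\to t)$. $\mathrm{ic}(e)=\{e'\mid e'\to e\}$, $\mathrm{ac}(H,e)=\{e'\mid\exists x\in H.(e',x,e)\in\lhd\}$. For $t=e_1\cdots e_n$, $\overline{t_k}=\{e_1,\ldots,e_k\}$. GES traces: finite sequences of pairwise distinct events, pairwise not in conflict, with $\mathrm{ic}(e_i)\cup\mathrm{ac}(\overline{t_{i-1}},e_i)\subseteq\overline{t_{i-1}}$ for all $i$. SES: $\sigma=(E,\#,\to,\triangleright)$ with $\#\subseteq E^2$ irreflexive symmetric, $\to\subseteq E^2$ a binary relation, $\triangleright\subseteq E^3$ with $(c,d,t)\in\triangleright$ (''$d$ drops cause $c$ of $t$'') implying $c\to t$. $\mathrm{dc}(H,e)=\{e'\mid\exists d\in H.(e',d,e)\in\triangleright\}$. SES traces: finite sequences of pairwise distinct events of $E$, pairwise not in conflict, with $\mathrm{ic}(e_i)\setminus\mathrm{dc}(\overline{t_{i-1}},e_i)\subseteq\overline{t_{i-1}}$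 for all $i$. *)

From Stdlib Require Import List.
Import ListNotations.

Set Implicit Arguments.

Record GES (T : Type) := {
  ges_E : T -> Prop;
  ges_conf : T -> T -> Prop;
  ges_cause : T -> T -> Prop;            (* e' -> e *)
  ges_add : T -> T -> T -> Prop;         (* (c,m,t): m adds c as a cause of t *)
}.

Definition GES_wf (T : Type) (g : GES T) : Prop :=
  (forall x, ~ ges_conf g x x) /\
  (forall x y, ges_conf g x y -> ges_conf g y x) /\
  (forall c m t, ges_add g c m t -> ~ ges_cause g c t).

Definition ges_ac (T : Type) (g : GES T) (H : list T) (e : T) (e' : T) : Prop :=
  exists x, In x H /\ ges_add g e' x e.

Definition GES_trace (T : Type) (g : GES T) (t : list T) : Prop :=
  NoDup t /\
  (forall e, In e t -> ges_E g e) /\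
  (forall x y, In x t -> In y t -> ~ ges_conf g x y) /\
  (forall pre e post, t = pre ++ e :: post ->
     forall c, (ges_cause g c e \/ ges_ac g pre e c) -> In c pre).

Record SES (T : Type) := {
  ses_E : T -> Prop;
  ses_conf : T -> T -> Prop;
  ses_cause : T -> T -> Prop;            (* e' -> e *)
  ses_drop : T -> T -> T -> Prop;        (* (c,d,t): d drops cause c of t *)
}.

Definition SES_wf (T : Type) (s : SES T) : Prop :=
  (forall x, ~ ses_conf s x x) /\
  (forall x y, ses_conf s x y -> ses_conf s y x) /\
  (forall c d t, ses_drop s c d t -> ses_cause s c t).

Definition ses_dc (T : Type) (s : SES T) (H : list T) (e : T) (e' : T) : Prop :=
  exists d, In d H /\ ses_drop s e' d e.

Definition SES_trace (T : Type) (s : SES T) (t : list T) : Prop :=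
  NoDup t /\
  (forall e, In e t -> ses_E s e) /\
  (forall x y, In x t -> In y t -> ~ ses_conf s x y) /\
  (forall pre e post, t = pre ++ e :: post ->
     forall c, ses_cause s c e -> ~ ses_dc s pre e c -> In c pre).

Definition gamma_sigma (T : Type) (a b : T) : GES T := {|
  ges_E := fun x => x = a \/ x = b;
  ges_conf := fun _ _ => False;
  ges_cause := fun _ _ => False;
  ges_add := fun c m t => c = a /\ m = b /\ t = a;
|}.

(* In an SES a singleton trace [e] shows that e has no causes at all, since the
   empty history drops nothing.  Once both a and b are cause-free, the order in
   which they occur is irrelevant, so the trace ab of gamma_sigma forces ba to be
   an SES trace too; but in gamma_sigma the earlier b adds a as a cause of a. *)
From Stdlib Require Import List Permutation.
Import ListNotations.

Set Implicit Arguments.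

Lemma app_cons_eq_single (T : Type) (x e : T) (pre post : list T) :
  [x] = pre ++ e :: post -> pre = [] /\ e = x.
Proof.
  destruct pre as [|y [|z pre]]; simpl; intros Heq; inversion Heq; auto.
Qed.

Lemma app_cons_eq_pair (T : Type) (x y e : T) (pre post : list T) :
  [x; y] = pre ++ e :: post -> (pre = [] /\ e = x) \/ (pre = [x] /\ e = y).
Proof.
  destruct pre as [|z [|w [|v pre]]]; simpl; intros Heq; inversion Heq; auto.
Qed.

Section SESTraces.

Variables (T : Type) (s : SES T).

Lemma SES_trace_single_no_cause (e c : T) :
  SES_trace s [e] -> ~ ses_cause s c e.
Proof.
  intros [_ [_ [_ Hcaus]]] Hc.
  apply (Hcaus [] e [] eq_refl c Hc).
  intros [d [[] _]].
Qed.

Lemma SES_trace_perm_cause_free (t t' : list T) :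
  (forall e c, In e t -> ~ ses_cause s c e) ->
  Permutation t t' -> SES_trace s t -> SES_trace s t'.
Proof.
  intros Hfree Hperm [Hnd [HE [Hconf _]]].
  assert (Hin : forall e, In e t' -> In e t)
    by (intros e; apply Permutation_in, Permutation_sym, Hperm).
  split; [|split; [|split]].
  - exact (Permutation_NoDup Hperm Hnd).
  - intros e He; apply HE, Hin, He.
  - intros x y Hx Hy; apply Hconf; apply Hin; assumption.
  - intros pre e post Heq c Hc _; exfalso.
    apply (Hfree e c); [apply Hin; rewrite Heq; apply in_elt | exact Hc].
Qed.

End SESTraces.

Section GammaSigma.

Variables (T : Type) (a b : T).
Hypothesis hab : a <> b.

Lemma gamma_sigma_trace_single (e : T) :
  e = a \/ e = b -> GES_trace (gamma_sigma a b) [e].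
Proof.
  intros He; split; [|split; [|split]].
  - repeat constructor; auto.
  - intros x [<-|[]]; exact He.
  - simpl; auto.
  - intros pre x post Heq c Hc.
    apply app_cons_eq_single in Heq as [-> ->].
    destruct Hc as [[]|[y [[] _]]].
Qed.

Lemma gamma_sigma_trace_ab : GES_trace (gamma_sigma a b) [a; b].
Proof.
  split; [|split; [|split]].
  - repeat constructor; simpl; intuition.
  - intros e [<-|[<-|[]]]; simpl; auto.
  - simpl; auto.
  - intros pre e post Heq c Hc.
    destruct Hc as [[]|[x [Hx [_ [_ He]]]]].
    apply app_cons_eq_pair in Heq as [[-> _]|[-> ->]].
    + destruct Hx.
    + congruence.
Qed.

Lemma gamma_sigma_not_trace_ba : ~ GES_trace (gamma_sigma a b) [b; a].
Proof.
  intros [_ [_ [_ Hcaus]]].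
  assert (Hin : In a [b]).
  { apply (Hcaus [b] a [] eq_refl a). right; exists b; simpl; auto. }
  destruct Hin as [Hba|[]]; congruence.
Qed.

End GammaSigma.

Theorem lemma13 (T : Type) (a b : T) (hab : a <> b) :
  ~ exists s : SES T, SES_wf s /\
      (forall t : list T, SES_trace s t <-> GES_trace (gamma_sigma a b) t).
Proof.
  intros [s [_ Hs]].
  assert (Hfree : forall e c, In e [a; b] -> ~ ses_cause s c e).
  { intros e c [<-|[<-|[]]]; apply SES_trace_single_no_cause, Hs.
    - apply gamma_sigma_trace_single; left; reflexivity.
    - apply gamma_sigma_trace_single; right; reflexivity. }
  apply (gamma_sigma_not_trace_ba hab), Hs.
  apply (SES_trace_perm_cause_free Hfree (perm_swap b a [])).
  apply Hs, gamma_sigma_trace_ab, hab.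
Qed.
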